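(* Let $X$ be a proper geodesic space with basepoint $x_0$. Suppose $p_n,p\in\partial_M X_{x_0}$ and $p_n\to p$ in the topology of $\partial_M X_{x_0}$. Then there exists a Morse gauge $N$ such that $p_n,p\in\partial_M^N X_{x_0}$ for all $n$ and $p_n\to p$ in the topology of $\partial_M^N X_{x_0}$.
   Context: A Morse gauge is a function $N:[1,\infty)\times[0,\infty)\to[0,\infty)$; a geodesic $\gamma$ is $N$-Morse if every $(\lambda,\epsilon)$-quasi-geodesic with endpoints on $\gamma$ lies in the $N(\lambda,\epsilon)$-neighborhood of $\gamma$. $\partial_M X_{x_0}$ is the set of Morse geodesic rays based at $x_0$ modulo finite Hausdorff distance; $\partial_M^N X_{x_0}$ is the subset of classes containing an $N$-Morse ray based at $x_0$, with the quotient of the compact-open topology on the set of $N$-Morse rays based at $x_0$; Morse gauges are ordered pointwise and $\partial_M X_{x_0}=\varinjlim_N\partial_M^N X_{x_0}$ has the direct limit topology ($U$ open iff $U\cap\partial_M^N X_{x_0}$ is open in $\partial_M^N X_{x_0}$ for all $N$). *)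

From Stdlib Require Import Reals List.
Open Scope R_scope.

Section MorseBoundary.
Variables (X : Type) (d : X -> X -> R).

Definition is_metric : Prop :=
  (forall x y, 0 <= d x y) /\ (forall x y, d x y = 0 <-> x = y) /\
  (forall x y, d x y = d y x) /\ (forall x y z, d x z <= d x y + d y z).

Definition mopen {T : Type} (dist : T -> T -> R) (O : T -> Prop) : Prop :=
  forall x, O x -> exists e, 0 < e /\ forall y, dist x y < e -> O y.

Definition mcompact {T : Type} (dist : T -> T -> R) (K : T -> Prop) : Prop :=
  forall (I : Type) (U : I -> T -> Prop),
    (forall i, mopen dist (U i)) ->
    (forall x, K x -> exists i, U i x) ->
    exists l : list I, forall x, K x -> exists i, In i l /\ U i x.

Definition Rdist (s t : R) : R := Rabs (s - t).

Definition proper_space : Prop :=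
  forall x r, mcompact d (fun y => d x y <= r).

Definition geodesic_space : Prop :=
  forall x y, exists g : R -> X, g 0 = x /\ g (d x y) = y /\
    forall s t, 0 <= s <= d x y -> 0 <= t <= d x y -> d (g s) (g t) = Rabs (s - t).

(** geodesic ray based at x0 (parametrised on [0,oo); values at negative times are irrelevant) *)
Definition geod_ray (x0 : X) (g : R -> X) : Prop :=
  g 0 = x0 /\ forall s t, 0 <= s -> 0 <= t -> d (g s) (g t) = Rabs (s - t).

(** (lam,eps)-quasi-geodesic q : [a,b] -> X (no continuity assumed) *)
Definition quasi_geod (lam eps : R) (q : R -> X) (a b : R) : Prop :=
  forall s t, a <= s <= b -> a <= t <= b ->
    (1 / lam) * Rabs (s - t) - eps <= d (q s) (q t) /\
    d (q s) (q t) <= lam * Rabs (s - t) + eps.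

Definition morse_gauge (N : R -> R -> R) : Prop :=
  forall lam eps, 1 <= lam -> 0 <= eps -> 0 <= N lam eps.

Definition N_morse (N : R -> R -> R) (g : R -> X) : Prop :=
  forall lam eps, 1 <= lam -> 0 <= eps ->
  forall (q : R -> X) (a b : R), a <= b -> quasi_geod lam eps q a b ->
    (exists s, 0 <= s /\ q a = g s) -> (exists s, 0 <= s /\ q b = g s) ->
    forall t, a <= t <= b -> exists s, 0 <= s /\ d (q t) (g s) <= N lam eps.

Definition N_morse_ray (N : R -> R -> R) (x0 : X) (g : R -> X) : Prop :=
  geod_ray x0 g /\ N_morse N g.

Definition morse_ray (x0 : X) (g : R -> X) : Prop :=
  exists N, morse_gauge N /\ N_morse_ray N x0 g.

Definition ray_equiv (g h : R -> X) : Prop :=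
  exists C, (forall s, 0 <= s -> exists t, 0 <= t /\ d (g s) (h t) <= C) /\
            (forall t, 0 <= t -> exists s, 0 <= s /\ d (g s) (h t) <= C).

(** Points of the Morse boundary are represented by Morse rays based at x0;
    sets of boundary points by predicates on rays saturated under ray_equiv. *)
Definition saturated (U : (R -> X) -> Prop) : Prop :=
  forall g h, ray_equiv g h -> U g -> U h.

Definition in_stratum (N : R -> R -> R) (x0 : X) (g : R -> X) : Prop :=
  exists h, N_morse_ray N x0 h /\ ray_equiv g h.

(** compact-open topology on maps [0,oo) -> X: subbasic sets V(K,O) *)
Definition co_subbasic (K : R -> Prop) (O : X -> Prop) : Prop :=
  mcompact Rdist K /\ (forall t, K t -> 0 <= t) /\ mopen d O.

Definition in_V (K : R -> Prop) (O : X -> Prop) (f : R -> X) : Prop :=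
  forall t, K t -> O (f t).

(** finite intersection of subbasic sets, as a list *)
Definition co_basic (B : list ((R -> Prop) * (X -> Prop))) : Prop :=
  forall KO, In KO B -> co_subbasic (fst KO) (snd KO).

Definition in_basic (B : list ((R -> Prop) * (X -> Prop))) (f : R -> X) : Prop :=
  forall KO, In KO B -> in_V (fst KO) (snd KO) f.

(** W ∩ (N-Morse rays at x0) is open in the subspace compact-open topology on the
    set of N-Morse rays based at x0; for saturated W this is exactly openness of
    (the image of) W in the quotient topology of ∂_M^N X_{x0}. *)
Definition stratum_open (N : R -> R -> R) (x0 : X) (W : (R -> X) -> Prop) : Prop :=
  forall g, N_morse_ray N x0 g -> W g ->
    exists B, co_basic B /\ in_basic B g /\
      forall h, N_morse_ray N x0 h -> in_basic B h -> W h.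

(** direct limit topology on ∂_M X_{x0} *)
Definition morse_open (x0 : X) (U : (R -> X) -> Prop) : Prop :=
  forall N, morse_gauge N -> stratum_open N x0 U.

Definition conv_morse (x0 : X) (p : nat -> R -> X) (q : R -> X) : Prop :=
  forall U, saturated U -> morse_open x0 U -> U q ->
    exists n0, forall n, (n0 <= n)%nat -> U (p n).

Definition conv_stratum (N : R -> R -> R) (x0 : X) (p : nat -> R -> X) (q : R -> X) : Prop :=
  forall W, saturated W -> stratum_open N x0 W -> W q ->
    exists n0, forall n, (n0 <= n)%nat -> W (p n).

End MorseBoundary.

(* A ray equivalent to an N-Morse ray fellow-travels it within 2 N(3,1), hence is
   Morse with a gauge depending only on N.  If p_n -> q in the direct limit
   topology, the p_n are uniformly Morse: otherwise pick terms with ever worse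
   constants; each stratum contains only finitely many of their classes, so the
   rays avoiding all of them form an open set containing q but missing infinitely
   many terms.  This yields one gauge N, with some slack, for all p_n and q.  If
   p_n did not converge to q in the N-stratum, a subsequence would stay outside an
   open W containing q; by Arzela-Ascoli a further subsequence converges uniformly
   on compacts to a ray beta, which is N-Morse thanks to the slack.  If beta ~ q
   the subsequence eventually enters W; otherwise the rays avoiding beta and the
   subsequence form an open set containing q, contradicting p_n -> q. *)

From Stdlib Require Import Reals List Lra Lia Classical ClassicalEpsilon.
From Stdlib Require Arith.Cantor.
Open Scope R_scope.

Definition increasing (s : nat -> nat) : Prop := forall j, (s j < s (S j))%nat.

Lemma increasing_lt s : increasing s -> forall m n, (m < n)%nat -> (s m < s n)%nat.
Proof.
  intros Hs m n Hmn. induction Hmn as [|n _ IH]; [apply Hs|].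
  specialize (Hs n). lia.
Qed.

Lemma increasing_ge s : increasing s -> forall j, (j <= s j)%nat.
Proof. intros Hs j. induction j as [|j IH]; [lia|]. specialize (Hs j). lia. Qed.

Lemma increasing_comp s s' : increasing s -> increasing s' -> increasing (fun j => s (s' j)).
Proof. intros Hs Hs' j. apply increasing_lt; auto. Qed.

Lemma increasing_select (P : nat -> nat -> Prop) :
  (forall j n0, exists n, (n0 <= n)%nat /\ P j n) ->
  exists m, increasing m /\ forall j, P j (m j).
Proof.
  intros H.
  destruct (choice (fun (jn : nat * nat) n => (snd jn <= n)%nat /\ P (fst jn) n)) as [F HF].
  { intros [j n0]. apply H. }
  set (m := fix m j := match j with O => F (O, O) | S j' => F (S j', S (m j')) end).
  exists m. split.
  - intros j. destruct (HF (S j, S (m j))) as [Hle _]. simpl in *. lia.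
  - intros [|j]; [apply (HF (O, O))|apply (HF (S j, S (m j)))].
Qed.

Lemma not_eventually_subseq (P : nat -> Prop) :
  ~ (exists n0, forall n, (n0 <= n)%nat -> P n) ->
  exists m, increasing m /\ forall j, ~ P (m j).
Proof.
  intros H. apply (increasing_select (fun _ n => ~ P n)).
  intros _ n0. apply NNPP. intros Hn. apply H. exists n0. intros n Hn0.
  apply NNPP. intros HP. apply Hn. exists n. auto.
Qed.

Lemma list_nat_bound {A} (f : A -> nat) (l : list A) :
  exists M, forall a, In a l -> (f a <= M)%nat.
Proof.
  induction l as [|a l [M HM]]; [exists O; intros a []|].
  exists (Nat.max M (f a)). intros b [<-|Hb]; [lia|]. specialize (HM b Hb). lia.
Qed.

Lemma list_real_bound {A} (f : A -> R) (l : list A) :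
  exists T, forall a, In a l -> f a <= T.
Proof.
  induction l as [|a l [T HT]]; [exists 0; intros a []|].
  exists (Rmax T (f a)). intros b [<-|Hb]; [apply Rmax_r|].
  eapply Rle_trans; [apply HT; auto|apply Rmax_l].
Qed.

Lemma list_pos_lower_bound {A} (f : A -> R) (l : list A) :
  (forall a, 0 < f a) -> exists eta, 0 < eta /\ forall a, In a l -> eta <= f a.
Proof.
  intros Hf. induction l as [|a l [eta [Heta H]]]; [exists 1; split; [lra|intros a []]|].
  exists (Rmin eta (f a)). split; [apply Rmin_glb_lt; auto|].
  intros b [<-|Hb]; [apply Rmin_r|]. eapply Rle_trans; [apply Rmin_l|auto].
Qed.

Lemma almost_min (f : R -> R) : (forall u, 0 <= f u) ->
  exists tau, 0 <= tau /\ forall u, 0 <= u -> f tau <= f u + 1.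
Proof.
  intros Hf. apply NNPP. intros Hno.
  assert (Hdescent : forall k, exists u, 0 <= u /\ f u <= f 0 - INR k).
  { induction k as [|k [u [Hu Hfu]]]; [exists 0; simpl; lra|].
    destruct (not_and_or _ _ (not_ex_all_not _ _ Hno u)) as [|Hnot]; [contradiction|].
    destruct (not_all_ex_not _ _ Hnot) as [v Hv].
    apply imply_to_and in Hv. destruct Hv as [Hv Hfv].
    exists v. split; auto. rewrite S_INR. lra. }
  destruct (INR_archimed 1 (f 0)) as [n Hn]; [lra|].
  destruct (Hdescent n) as [u [_ Hfu]]. specialize (Hf u). lra.
Qed.

Lemma grid_approx delta M t : 0 < delta -> 0 <= t <= INR M * delta ->
  exists l, (l <= M)%nat /\ Rabs (t - INR l * delta) <= delta.
Proof.
  intros Hd. induction M as [|M IH]; intros Ht.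
  - exists O. split; auto. simpl in *. rewrite Rabs_pos_eq; lra.
  - destruct (Rle_dec t (INR M * delta)).
    + destruct IH as [l [Hl Hdl]]; [lra|]. exists l. split; auto.
    + exists (S M). split; auto. rewrite S_INR in *. apply Rabs_le. lra.
Qed.

Definition rational_time (i : nat) : R :=
  INR (fst (Cantor.of_nat i)) / INR (S (snd (Cantor.of_nat i))).

Lemma rational_time_nonneg i : 0 <= rational_time i.
Proof.
  apply Rmult_le_pos; [apply pos_INR|]. left. apply Rinv_0_lt_compat, lt_0_INR. lia.
Qed.

Lemma rational_time_dense t eta : 0 <= t -> 0 < eta ->
  exists i, Rabs (rational_time i - t) < eta.
Proof.
  intros Ht He. destruct (archimed_cor1 eta He) as [[|b] [Hb Hb0]]; [lia|].
  set (delta := / INR (S b)).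
  assert (Hd : 0 < delta) by (apply Rinv_0_lt_compat, lt_0_INR; lia).
  destruct (INR_archimed delta t Hd) as [M HM].
  destruct (grid_approx delta M t Hd) as [l [_ Hl]]; [lra|].
  exists (Cantor.to_nat (l, b)). unfold rational_time. rewrite Cantor.cancel_of_to.
  simpl fst; simpl snd. rewrite Rabs_minus_sym. unfold delta in *. unfold Rdiv. lra.
Qed.

Lemma compact_cover_radius (K : R -> Prop) (E : R -> R) :
  mcompact Rdist K -> (forall t, 0 < E t) ->
  exists l, forall u, K u -> exists t, In t l /\ K t /\ Rabs (t - u) < E t.
Proof.
  intros HK HE.
  apply (HK R (fun t u => K t /\ Rdist t u < E t)).
  - intros t u [Kt Hu]. exists (E t - Rdist t u). split; [lra|].
    intros v Hv. split; auto. unfold Rdist in *.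
    pose proof (Rabs_triang (t - u) (u - v)) as Htri.
    replace (t - u + (u - v)) with (t - v) in Htri by ring. lra.
  - intros u Ku. exists u. split; auto. unfold Rdist. rewrite Rminus_diag, Rabs_R0. auto.
Qed.

Section MorseRays.
Variables (X : Type) (d : X -> X -> R).
Hypothesis Hm : is_metric X d.

Local Notation ray := (geod_ray X d).
Local Notation equiv := (ray_equiv X d).

Lemma d_nonneg x y : 0 <= d x y.
Proof. destruct Hm as [H _]. apply H. Qed.

Lemma d_eq x y : d x y = 0 -> x = y.
Proof. destruct Hm as [_ [H _]]. apply H. Qed.

Lemma d_refl x : d x x = 0.
Proof. destruct Hm as [_ [H _]]. apply H. reflexivity. Qed.

Lemma d_sym x y : d x y = d y x.
Proof. destruct Hm as [_ [_ [H _]]]. apply H. Qed.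

Lemma d_triangle x y z : d x z <= d x y + d y z.
Proof. destruct Hm as [_ [_ [_ H]]]. apply H. Qed.

Lemma ray_dist_base x0 g : ray x0 g -> forall t, 0 <= t -> d x0 (g t) = t.
Proof.
  intros [H0 H] t Ht. rewrite <- H0, H by lra. rewrite Rabs_left1; lra.
Qed.

Lemma ray_sync x0 a b t u c : ray x0 a -> ray x0 b -> 0 <= t -> 0 <= u ->
  d (b t) (a u) <= c -> d (b t) (a t) <= 2 * c.
Proof.
  intros Ha Hb Ht Hu H.
  pose proof (ray_dist_base x0 a Ha u Hu). pose proof (ray_dist_base x0 b Hb t Ht).
  pose proof (d_triangle x0 (b t) (a u)). pose proof (d_triangle x0 (a u) (b t)).
  pose proof (d_triangle (b t) (a u) (a t)).
  rewrite (d_sym (a u) (b t)), (proj2 Ha u t Hu Ht) in *.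
  assert (Rabs (u - t) <= c) by (apply Rabs_le; lra). lra.
Qed.

Lemma ray_equiv_refl g : equiv g g.
Proof. exists 0. split; intros s Hs; exists s; rewrite d_refl; split; lra. Qed.

Lemma ray_equiv_sym g h : equiv g h -> equiv h g.
Proof.
  intros [C [H1 H2]]. exists C. split.
  - intros s Hs. destruct (H2 s Hs) as [t [Ht Hd]]. exists t. rewrite d_sym. auto.
  - intros t Ht. destruct (H1 t Ht) as [s [Hs Hd]]. exists s. rewrite d_sym. auto.
Qed.

Lemma ray_equiv_trans g h k : equiv g h -> equiv h k -> equiv g k.
Proof.
  intros [C1 [H1 H2]] [C2 [H3 H4]]. exists (C1 + C2). split.
  - intros s Hs. destruct (H1 s Hs) as [t [Ht Hd]]. destruct (H3 t Ht) as [u [Hu Hd']].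
    exists u. pose proof (d_triangle (g s) (h t) (k u)). split; [auto|lra].
  - intros u Hu. destruct (H4 u Hu) as [t [Ht Hd]]. destruct (H2 t Ht) as [s [Hs Hd']].
    exists s. pose proof (d_triangle (g s) (h t) (k u)). split; [auto|lra].
Qed.

Lemma saturated_not_equiv a : saturated X d (fun g => ~ equiv g a).
Proof.
  intros g h Hgh Hg Hh. apply Hg. exact (ray_equiv_trans g h a Hgh Hh).
Qed.

(** * Fellow travelling *)

Definition morse_const (lam eps c : R) (g : R -> X) : Prop :=
  forall (q : R -> X) (a b : R), a <= b -> quasi_geod X d lam eps q a b ->
    (exists s, 0 <= s /\ q a = g s) -> (exists s, 0 <= s /\ q b = g s) ->
    forall t, a <= t <= b -> exists s, 0 <= s /\ d (q t) (g s) <= c.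

Lemma morse_const_mono lam eps eps' c c' g : eps' <= eps -> c <= c' ->
  morse_const lam eps c g -> morse_const lam eps' c' g.
Proof.
  intros He Hc H q a b Hab Hq Ha Hb t Ht.
  destruct (H q a b Hab) with (t := t) as [s [Hs Hd]]; auto.
  - intros u v Hu Hv. destruct (Hq u v Hu Hv). split; lra.
  - exists s. split; [auto|lra].
Qed.

Lemma quasi_geod_perturb lam eps q q' a b D :
  quasi_geod X d lam eps q a b -> (forall u, a <= u <= b -> d (q' u) (q u) <= D) ->
  quasi_geod X d lam (eps + 2 * D) q' a b.
Proof.
  intros Hq HD s t Hs Ht. destruct (Hq s t Hs Ht) as [H1 H2].
  pose proof (HD s Hs). pose proof (HD t Ht).
  pose proof (d_triangle (q' s) (q s) (q' t)). pose proof (d_triangle (q s) (q t) (q' t)).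
  pose proof (d_triangle (q s) (q' s) (q t)). pose proof (d_triangle (q' s) (q' t) (q t)).
  rewrite (d_sym (q t) (q' t)), (d_sym (q s) (q' s)) in *.
  split; lra.
Qed.

Definition replace_ends (q : R -> X) (a b : R) (x y : X) : R -> X :=
  fun u => if Req_dec_T u a then x else if Req_dec_T u b then y else q u.

(* Moving the endpoints of a quasi-geodesic onto nearby points of [g] lets the
   Morse property of [g] apply to it. *)
Lemma morse_const_close_ends g lam eps c D q a b s1 s2 :
  a <= b -> quasi_geod X d lam eps q a b -> 0 <= s1 -> 0 <= s2 ->
  d (q a) (g s1) <= D -> d (q b) (g s2) <= D ->
  morse_const lam (eps + 2 * D) c g ->
  forall t, a <= t <= b -> exists s, 0 <= s /\ d (q t) (g s) <= c + D.
Proof.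
  intros Hab Hq Hs1 Hs2 Ha Hb HM t Ht.
  set (q' := replace_ends q a b (g s1) (g s2)).
  assert (HD : forall u, a <= u <= b -> d (q' u) (q u) <= D).
  { pose proof (d_nonneg (q a) (g s1)).
    intros u Hu. unfold q', replace_ends.
    destruct (Req_dec_T u a) as [->|]; [rewrite d_sym; auto|].
    destruct (Req_dec_T u b) as [->|]; [rewrite d_sym; auto|].
    rewrite d_refl. lra. }
  destruct (HM q' a b Hab (quasi_geod_perturb _ _ _ _ _ _ _ Hq HD)) with (t := t)
    as [s [Hs Hd]]; auto.
  - exists s1. split; auto. unfold q', replace_ends. destruct (Req_dec_T a a); congruence.
  - unfold q', replace_ends. destruct (Req_dec_T b a); [exists s1; auto|].
    exists s2. split; auto. destruct (Req_dec_T b b); congruence.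
  - exists s. pose proof (HD t Ht). pose proof (d_triangle (q t) (q' t) (g s)).
    rewrite (d_sym (q t) (q' t)) in *. split; [auto|lra].
Qed.

Lemma morse_const_fellow a b lam eps c D :
  (forall s, 0 <= s -> d (b s) (a s) <= D) ->
  morse_const lam (eps + 2 * D) c a -> morse_const lam eps (c + 2 * D) b.
Proof.
  intros Hab Ha q l r Hlr Hq [s1 [Hs1 E1]] [s2 [Hs2 E2]] t Ht.
  destruct (morse_const_close_ends a lam eps c D q l r s1 s2) with (t := t)
    as [s [Hs Hd]]; auto.
  - rewrite E1. auto.
  - rewrite E2. auto.
  - exists s. pose proof (Hab s Hs). pose proof (d_triangle (q t) (a s) (b s)).
    rewrite (d_sym (a s) (b s)) in *. split; [auto|lra].
Qed.

Definition concat_path (b sg : R -> X) (tau : R) : R -> X :=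
  fun u => if Rle_dec u tau then b u else sg (u - tau).

Lemma concat_quasi_geod x0 b sg tau y :
  ray x0 b -> 0 <= tau ->
  sg 0 = b tau -> sg (d (b tau) y) = y ->
  (forall s t, 0 <= s <= d (b tau) y -> 0 <= t <= d (b tau) y ->
     d (sg s) (sg t) = Rabs (s - t)) ->
  (forall u, 0 <= u -> d y (b tau) <= d y (b u) + 1) ->
  quasi_geod X d 3 1 (concat_path b sg tau) 0 (tau + d (b tau) y).
Proof.
  intros [_ Hb] Htau Hs0 HsL Hs Hmin. set (L := d (b tau) y) in *.
  assert (HL : 0 <= L) by apply d_nonneg.
  assert (Hcross : forall u v, 0 <= u <= tau -> tau < v <= tau + L ->
     1/3 * Rabs (u - v) - 1 <= d (b u) (sg (v - tau)) /\
     d (b u) (sg (v - tau)) <= 3 * Rabs (u - v) + 1).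
  { intros u v Hu Hv. set (w := v - tau).
    assert (Hw : 0 <= w <= L) by (unfold w; lra).
    pose proof (Hs 0 w ltac:(lra) Hw) as H1. rewrite Hs0, Rabs_left1 in H1 by lra.
    pose proof (Hb u tau ltac:(lra) Htau) as H2. rewrite Rabs_left1 in H2 by lra.
    pose proof (Hs L w ltac:(lra) Hw) as H3. rewrite HsL, Rabs_pos_eq in H3 by lra.
    pose proof (d_triangle (b u) (b tau) (sg w)).
    pose proof (d_triangle (b u) (sg w) (b tau)).
    pose proof (d_triangle y (sg w) (b u)).
    pose proof (Hmin u ltac:(lra)) as H5.
    rewrite (d_sym (sg w) (b tau)), (d_sym (sg w) (b u)) in *.
    rewrite (d_sym y (b tau)) in H5. fold L in H5.
    rewrite Rabs_left1 by (unfold w in *; lra).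
    unfold w in *. split; lra. }
  intros u v Hu Hv. unfold concat_path.
  destruct (Rle_dec u tau), (Rle_dec v tau).
  - rewrite (Hb u v) by lra. pose proof (Rabs_pos (u - v)). split; lra.
  - apply Hcross; lra.
  - rewrite d_sym, Rabs_minus_sym. apply Hcross; lra.
  - replace (u - v) with ((u - tau) - (v - tau)) by ring.
    rewrite Hs by lra. pose proof (Rabs_pos (u - tau - (v - tau))). split; lra.
Qed.

Hypothesis Hgeod : geodesic_space X d.

(* Follow [b] to an almost closest point [b tau] to a far point [y] of [a],
   then a geodesic to [y]: this is a (3,1)-quasi-geodesic with endpoints on [a]. *)
Lemma fellow_travel x0 a b c : ray x0 a -> morse_const 3 1 c a -> ray x0 b -> equiv b a ->
  forall t, 0 <= t -> d (b t) (a t) <= 2 * c.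
Proof.
  intros Ha HaM Hb [C [_ HC]] t Ht.
  assert (HC0 : 0 <= C).
  { destruct (HC 0 (Rle_refl 0)) as [s [_ Hs]]. pose proof (d_nonneg (b s) (a 0)). lra. }
  set (y := a (t + C + 2)).
  destruct (almost_min (fun u => d y (b u))) as [tau [Htau Hmin]]; [intros; apply d_nonneg|].
  assert (Htau_t : t + 1 <= tau).
  { destruct (HC (t + C + 2)) as [u [Hu Hyu]]; [lra|].
    pose proof (Hmin u Hu). pose proof (ray_dist_base x0 a Ha (t + C + 2) ltac:(lra)).
    pose proof (ray_dist_base x0 b Hb tau Htau). pose proof (d_triangle x0 (b tau) y).
    unfold y in *. rewrite d_sym in Hyu.
    rewrite (d_sym (b tau) (a (t + C + 2))) in *. lra. }
  destruct (Hgeod (b tau) y) as [sg [Hsg0 [HsgL Hsg]]].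
  pose proof (concat_quasi_geod x0 b sg tau y Hb Htau Hsg0 HsgL Hsg Hmin) as HQ.
  set (L := d (b tau) y) in *. set (Q := concat_path b sg tau) in *.
  assert (HL0 : 0 <= L) by apply d_nonneg.
  assert (HQ0 : Q 0 = a 0).
  { unfold Q, concat_path. destruct (Rle_dec 0 tau); [|lra].
    destruct Ha as [-> _], Hb as [-> _]. reflexivity. }
  assert (HQL : Q (tau + L) = a (t + C + 2)).
  { unfold Q, concat_path. destruct (Rle_dec (tau + L) tau).
    - assert (HL : L = 0) by lra.
      rewrite HL, Rplus_0_r. apply d_eq. exact HL.
    - replace (tau + L - tau) with L by ring. exact HsgL. }
  destruct (HaM Q 0 (tau + L)) with (t := t) as [u [Hu Hdu]].
  - lra.
  - exact HQ.
  - exists 0. split; [lra|exact HQ0].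
  - exists (t + C + 2). split; [lra|exact HQL].
  - lra.
  - apply (ray_sync x0 a b t u c Ha Hb Ht Hu).
    unfold Q, concat_path in Hdu. destruct (Rle_dec t tau); [exact Hdu|lra].
Qed.

(* [4 N(3,1)] is twice the fellow-travelling distance [2 N(3,1)]. *)
Definition equiv_gauge (N : R -> R -> R) (lam eps : R) : R :=
  N lam (eps + 4 * N 3 1) + 4 * N 3 1.

Lemma N_morse_equiv x0 N a b : N_morse_ray X d N x0 a -> ray x0 b -> equiv b a ->
  N_morse X d (equiv_gauge N) b.
Proof.
  intros [Ha HaM] Hb Hba lam eps Hl He.
  pose proof (fellow_travel x0 a b (N 3 1) Ha (HaM 3 1 ltac:(lra) ltac:(lra)) Hb Hba) as Hf.
  assert (HD : 0 <= 2 * N 3 1).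
  { specialize (Hf 0 (Rle_refl 0)). pose proof (d_nonneg (b 0) (a 0)). lra. }
  unfold equiv_gauge. replace (4 * N 3 1) with (2 * (2 * N 3 1)) by ring.
  apply (morse_const_fellow a b); [exact Hf|].
  exact (HaM lam (eps + 2 * (2 * N 3 1)) Hl ltac:(lra)).
Qed.

Lemma not_equiv_far g a : ~ equiv g a -> forall c, exists T, 0 <= T /\ c < d (g T) (a T).
Proof.
  intros Hn c. apply NNPP. intros Hc. apply Hn. exists c.
  split; intros s Hs; exists s; split; auto; apply Rnot_lt_le; intros Hlt; apply Hc; eauto.
Qed.

Lemma separate_from_morse x0 a c g : ray x0 a -> morse_const 3 1 c a -> ~ equiv g a ->
  exists T, 0 <= T /\ forall h, ray x0 h -> d (g T) (h T) < 1 -> ~ equiv h a.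
Proof.
  intros Ha HaM Hn. destruct (not_equiv_far g a Hn (2 * c + 1)) as [T [HT Hd]].
  exists T. split; auto. intros h Hh Hgh Hha.
  pose proof (fellow_travel x0 a h c Ha HaM Hh Hha T HT).
  pose proof (d_triangle (g T) (h T) (a T)). lra.
Qed.

Lemma separate_finitely x0 (r : nat -> R -> X) g :
  (forall k, morse_ray X d x0 (r k)) -> (forall k, ~ equiv g (r k)) ->
  forall K, exists Ts, (forall T, In T Ts -> 0 <= T) /\
    forall h, ray x0 h -> (forall T, In T Ts -> d (g T) (h T) < 1) ->
      forall k, (k < K)%nat -> ~ equiv h (r k).
Proof.
  intros Hr Hg K. induction K as [|K [Ts [HTs HK]]].
  - exists nil. split; [intros T []|intros; lia].
  - destruct (Hr K) as [N [_ [HrK HrKM]]].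
    destruct (separate_from_morse x0 (r K) (N 3 1) g HrK (HrKM 3 1 ltac:(lra) ltac:(lra)) (Hg K))
      as [T [HT HsepT]].
    exists (T :: Ts). split; [intros T' [<-|HT']; auto|].
    intros h Hh Hpins k Hk. destruct (Nat.eq_dec k K) as [->|Hne].
    + apply HsepT; auto. apply Hpins. left. reflexivity.
    + apply HK; auto; [intros T' HT'; apply Hpins; right; auto|lia].
Qed.

(** * Open sets of the Morse boundary *)

Lemma ball_open x r : mopen d (fun y => d x y < r).
Proof.
  intros y Hy. exists (r - d x y). split; [lra|].
  intros z Hz. pose proof (d_triangle x y z). lra.
Qed.

Lemma singleton_compact T : mcompact Rdist (fun t => t = T).
Proof.
  intros I U _ Hc. destruct (Hc T eq_refl) as [i Hi].
  exists (i :: nil). intros x ->. exists i. split; [left|]; auto.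
Qed.

Lemma pins_basic g Ts : (forall T, In T Ts -> 0 <= T) ->
  exists B, co_basic X d B /\ in_basic X B g /\
    forall h, in_basic X B h -> forall T, In T Ts -> d (g T) (h T) < 1.
Proof.
  intros HTs. exists (map (fun T => (fun t => t = T, fun y => d (g T) y < 1)) Ts).
  split; [|split].
  - intros KO HKO. apply in_map_iff in HKO. destruct HKO as [T [<- HT]].
    split; [apply singleton_compact|]. split; [intros t ->; auto|apply ball_open].
  - intros KO HKO. apply in_map_iff in HKO. destruct HKO as [T [<- _]].
    intros t ->. simpl. rewrite d_refl. lra.
  - intros h Hh T HT.
    apply (Hh (fun t => t = T, fun y => d (g T) y < 1)); [|reflexivity].
    apply in_map_iff. exists T. auto.
Qed.

Lemma morse_open_of_pins x0 (U : (R -> X) -> Prop) :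
  (forall N g, morse_gauge N -> N_morse_ray X d N x0 g -> U g ->
    exists Ts, (forall T, In T Ts -> 0 <= T) /\
      forall h, N_morse_ray X d N x0 h -> (forall T, In T Ts -> d (g T) (h T) < 1) -> U h) ->
  morse_open X d x0 U.
Proof.
  intros H N HN g Hg Ug. destruct (H N g HN Hg Ug) as [Ts [HTs HU]].
  destruct (pins_basic g Ts HTs) as [B [HB [HgB HhB]]].
  exists B. split; [|split]; auto.
Qed.

Lemma avoid_seq_open x0 (r : nat -> R -> X) :
  (forall k, morse_ray X d x0 (r k)) ->
  (forall N, morse_gauge N -> exists K, forall k h, (K <= k)%nat ->
     N_morse_ray X d N x0 h -> ~ equiv h (r k)) ->
  morse_open X d x0 (fun g => forall k, ~ equiv g (r k)).
Proof.
  intros Hr Htail. apply morse_open_of_pins. intros N g HN _ Ug.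
  destruct (Htail N HN) as [K HK].
  destruct (separate_finitely x0 r g Hr Ug K) as [Ts [HTs Hsep]].
  exists Ts. split; auto. intros h Hh Hpins k.
  destruct (Compare_dec.lt_dec k K).
  - apply (Hsep h (proj1 Hh)); auto.
  - apply HK; auto. lia.
Qed.

Lemma prefix_common_const lam eps (g : nat -> R -> X) :
  (forall n, exists c, morse_const lam eps c (g n)) ->
  forall n0, exists C, forall n, (n <= n0)%nat -> morse_const lam eps C (g n).
Proof.
  intros Hg n0. induction n0 as [|n0 [C HC]].
  - destruct (Hg O) as [c Hc]. exists c. intros n Hn. replace n with O by lia. exact Hc.
  - destruct (Hg (S n0)) as [c Hc]. exists (Rmax C c). intros n Hn.
    destruct (Nat.eq_dec n (S n0)) as [->|Hne].
    + apply (morse_const_mono lam eps eps c); [lra|apply Rmax_r|exact Hc].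
    + apply (morse_const_mono lam eps eps C); [lra|apply Rmax_l|apply HC; lia].
Qed.

Lemma conv_morse_common_const x0 p q :
  (forall n, morse_ray X d x0 (p n)) -> morse_ray X d x0 q -> conv_morse X d x0 p q ->
  forall lam eps, 1 <= lam -> 0 <= eps -> exists c, forall n, morse_const lam eps c (p n).
Proof.
  intros Hp Hq Hconv lam eps Hl He. apply NNPP. intros Hno.
  assert (Hpr : forall n, ray x0 (p n)) by (intros n; destruct (Hp n) as [? [_ [H _]]]; exact H).
  assert (Hbad : forall c n0, exists n, (n0 <= n)%nat /\ ~ morse_const lam eps c (p n)).
  { intros c n0. destruct (prefix_common_const lam eps p) with (n0 := n0) as [C HC].
    { intros n. destruct (Hp n) as [N [_ [_ HN]]]. exists (N lam eps). exact (HN lam eps Hl He). }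
    apply NNPP. intros Hc. apply Hno. exists (Rmax C c). intros n.
    destruct (Compare_dec.le_lt_dec n n0).
    - apply (morse_const_mono lam eps eps C); [lra|apply Rmax_l|auto].
    - apply (morse_const_mono lam eps eps c); [lra|apply Rmax_r|].
      apply NNPP. intros Hn. apply Hc. exists n. split; [lia|auto]. }
  destruct Hq as [M [HM [Hqr HqM]]].
  set (C0 := equiv_gauge M lam eps).
  destruct (choice (fun k n => (k <= n)%nat /\ ~ morse_const lam eps (INR k + C0) (p n)))
    as [n Hn]; [intros k; apply Hbad|].
  assert (Hequiv_const : forall N k h, N_morse_ray X d N x0 h -> equiv (p (n k)) h ->
            morse_const lam eps (equiv_gauge N lam eps) (p (n k))).
  { intros N k h Hh Heq. exact (N_morse_equiv x0 N h _ Hh (Hpr _) Heq lam eps Hl He). }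
  set (U := fun g => forall k, ~ equiv g (p (n k))).
  assert (Uq : U q).
  { intros k Heq. apply (proj2 (Hn k)).
    apply (morse_const_mono lam eps eps C0); [lra|pose proof (pos_INR k); lra|].
    apply (Hequiv_const M k q); [split; auto|apply ray_equiv_sym; auto]. }
  assert (Uopen : morse_open X d x0 U).
  { apply avoid_seq_open; [intros; apply Hp|]. intros N HN.
    destruct (INR_unbounded (equiv_gauge N lam eps - C0)) as [K HK].
    exists K. intros k h Hk Hh Heq. apply (proj2 (Hn k)).
    apply (morse_const_mono lam eps eps (equiv_gauge N lam eps)); [lra| |].
    - apply le_INR in Hk. lra.
    - apply (Hequiv_const N k h Hh). apply ray_equiv_sym. auto. }
  assert (Usat : saturated X d U).
  { intros g h Hgh Ug k. exact (saturated_not_equiv _ g h Hgh (Ug k)). }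
  destruct (Hconv U Usat Uopen Uq) as [n0 Hn0].
  apply (Hn0 (n n0) (proj1 (Hn n0)) n0). apply ray_equiv_refl.
Qed.

(** * Limits of geodesic rays *)

Definition seq_conv (y : nat -> X) (z : X) : Prop :=
  forall eta, 0 < eta -> exists J, forall j, (J <= j)%nat -> d (y j) z < eta.

Definition seq_cauchy (y : nat -> X) : Prop :=
  forall eta, 0 < eta -> exists J, forall j j', (J <= j)%nat -> (J <= j')%nat -> d (y j) (y j') < eta.

Lemma seq_conv_cauchy y z : seq_conv y z -> seq_cauchy y.
Proof.
  intros H eta He. destruct (H (eta / 2)) as [J HJ]; [lra|]. exists J. intros j j' Hj Hj'.
  pose proof (HJ j Hj). pose proof (HJ j' Hj'). pose proof (d_triangle (y j) z (y j')).
  rewrite (d_sym z (y j')) in *. lra.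
Qed.

Lemma seq_conv_reindex (y : nat -> X) (phi psi : nat -> nat) z i : seq_conv (fun j => y (phi j)) z ->
  (forall j, (i <= j)%nat -> exists k, (j <= k)%nat /\ psi j = phi k) ->
  seq_conv (fun j => y (psi j)) z.
Proof.
  intros H Hpsi eta He. destruct (H eta He) as [J HJ]. exists (Nat.max i J). intros j Hj.
  destruct (Hpsi j ltac:(lia)) as [k [Hk ->]]. apply HJ. lia.
Qed.

Lemma seq_conv_finite (y : nat -> nat -> X) (z : nat -> X) M :
  (forall l, (l <= M)%nat -> seq_conv (y l) (z l)) ->
  forall eta, 0 < eta ->
    exists J, forall j, (J <= j)%nat -> forall l, (l <= M)%nat -> d (y l j) (z l) < eta.
Proof.
  intros H eta He. induction M as [|M IH].
  - destruct (H O (le_n O) eta He) as [J HJ]. exists J. intros j Hj l Hl.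
    replace l with O by lia. auto.
  - destruct IH as [J1 HJ1]; [intros l Hl; apply H; lia|].
    destruct (H (S M) (le_n _) eta He) as [J2 HJ2].
    exists (Nat.max J1 J2). intros j Hj l Hl. destruct (Nat.eq_dec l (S M)) as [->|].
    + apply HJ2. lia.
    + apply HJ1; lia.
Qed.

Lemma diagonal_subseq (y : nat -> nat -> X) :
  (forall i phi, exists s z, increasing s /\ seq_conv (fun j => y i (phi (s j))) z) ->
  exists psi, increasing psi /\ forall i, exists z, seq_conv (fun j => y i (psi j)) z.
Proof.
  intros H.
  destruct (choice (fun (iphi : nat * (nat -> nat)) (sz : (nat -> nat) * X) =>
     increasing (fst sz) /\ seq_conv (fun j => y (fst iphi) (snd iphi (fst sz j))) (snd sz)))
    as [St HSt].
  { intros [i phi]. destruct (H i phi) as [s [z Hsz]]. exists (s, z). exact Hsz. }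
  set (Phi := fix Phi (i : nat) : nat -> nat := match i with
     | O => fun j => j
     | S i' => fun j => Phi i' (fst (St (i', Phi i')) j) end).
  assert (HPhi_S : forall i j, Phi (S i) j = Phi i (fst (St (i, Phi i)) j)) by reflexivity.
  assert (Hst : forall i, increasing (fst (St (i, Phi i)))) by (intros i; apply (HSt (i, Phi i))).
  assert (HPhi : forall i, increasing (Phi i)).
  { induction i as [|i IH]; intros j; [simpl; lia|].
    rewrite !HPhi_S. apply increasing_lt; [apply IH|apply Hst]. }
  assert (Hnest : forall l i x, exists k, (x <= k)%nat /\ Phi (l + i)%nat x = Phi i k).
  { induction l as [|l IH]; intros i x; [exists x; auto|].
    destruct (IH i (fst (St ((l + i)%nat, Phi (l + i)%nat)) x)) as [k [Hk E]].
    pose proof (increasing_ge _ (Hst (l + i)%nat) x).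
    exists k. split; [lia|]. rewrite <- E. apply (HPhi_S (l + i)%nat). }
  exists (fun j => Phi j j). split.
  - intros j. rewrite HPhi_S. apply increasing_lt; [apply HPhi|].
    pose proof (increasing_ge _ (Hst j) (S j)). lia.
  - intros i. exists (snd (St (i, Phi i))).
    apply (seq_conv_reindex (y i) (Phi (S i)) _ _ (S i)); [apply (HSt (i, Phi i))|].
    intros j Hj. destruct (Hnest (j - S i)%nat (S i) j) as [k [Hk E]].
    exists k. split; auto. replace (j - S i + S i)%nat with j in E by lia. exact E.
Qed.

Hypothesis Hprop : proper_space X d.

Lemma proper_cluster x0 r (y : nat -> X) : (forall j, d x0 (y j) <= r) ->
  exists z, forall eta, 0 < eta -> forall J, exists j, (J <= j)%nat /\ d (y j) z < eta.
Proof.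
  intros Hy. apply NNPP. intros Hno.
  assert (Hfar : forall z, exists e : R * nat,
             0 < fst e /\ forall j, (snd e <= j)%nat -> fst e <= d (y j) z).
  { intros z. apply NNPP. intros Hz. apply Hno. exists z. intros eta Heta J.
    apply NNPP. intros HJ. apply Hz. exists (eta, J). split; auto.
    intros j Hj. apply Rnot_lt_le. intros Hl. apply HJ. exists j. auto. }
  destruct (choice _ Hfar) as [E HE].
  destruct (Hprop x0 r X (fun z y => d z y < fst (E z))) as [l Hl].
  - intros z. apply ball_open.
  - intros w _. exists w. rewrite d_refl. apply HE.
  - destruct (list_nat_bound (fun z => snd (E z)) l) as [M HM].
    destruct (Hl (y M) (Hy M)) as [z [Hz Hb]].
    pose proof (proj2 (HE z) M (HM z Hz)). rewrite d_sym in Hb. lra.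
Qed.

Lemma proper_subseq_conv x0 r y : (forall j, d x0 (y j) <= r) ->
  exists s z, increasing s /\ seq_conv (fun j => y (s j)) z.
Proof.
  intros Hy. destruct (proper_cluster x0 r y Hy) as [z Hz].
  destruct (increasing_select (fun j n => d (y n) z < / INR (S j))) as [s [Hs Hsz]].
  { intros j n0. apply Hz. apply Rinv_0_lt_compat, lt_0_INR. lia. }
  exists s, z. split; auto. intros eta He. destruct (archimed_cor1 eta He) as [J [HJ HJ0]].
  exists J. intros j Hj. eapply Rlt_trans; [apply Hsz|]. eapply Rle_lt_trans; [|apply HJ].
  apply Rinv_le_contravar; [apply lt_0_INR; lia|apply le_INR; lia].
Qed.

Lemma proper_cauchy_conv x0 r y : (forall j, d x0 (y j) <= r) -> seq_cauchy y ->
  exists z, seq_conv y z.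
Proof.
  intros Hy Hc. destruct (proper_cluster x0 r y Hy) as [z Hz]. exists z.
  intros eta He. destruct (Hc (eta / 2)) as [J HJ]; [lra|].
  destruct (Hz (eta / 2) ltac:(lra) J) as [j1 [Hj1 Hd1]].
  exists J. intros j Hj. pose proof (HJ j j1 Hj Hj1). pose proof (d_triangle (y j) (y j1) z).
  lra.
Qed.

Lemma rays_cauchy x0 (s : nat -> R -> X) : (forall j, ray x0 (s j)) ->
  (forall i, exists z, seq_conv (fun j => s j (rational_time i)) z) ->
  forall t, 0 <= t -> seq_cauchy (fun j => s j t).
Proof.
  intros Hs Hconv t Ht eta He.
  destruct (rational_time_dense t (eta / 3) Ht) as [i Hi]; [lra|].
  pose proof (rational_time_nonneg i) as Hi0. set (ti := rational_time i) in *.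
  destruct (Hconv i) as [z Hz].
  destruct (seq_conv_cauchy _ _ Hz (eta / 3)) as [J HJ]; [lra|].
  exists J. intros j j' Hj Hj'. specialize (HJ j j' Hj Hj'). fold ti in HJ.
  pose proof (proj2 (Hs j) t ti Ht Hi0) as H1. pose proof (proj2 (Hs j') ti t Hi0 Ht) as H2.
  rewrite Rabs_minus_sym in H1.
  pose proof (d_triangle (s j t) (s j ti) (s j' t)).
  pose proof (d_triangle (s j ti) (s j' ti) (s j' t)). lra.
Qed.

Lemma rays_limit_ray x0 (s : nat -> R -> X) beta : (forall j, ray x0 (s j)) ->
  (forall t, 0 <= t -> seq_conv (fun j => s j t) (beta t)) -> ray x0 beta.
Proof.
  intros Hs Hb. split.
  - symmetry. apply d_eq, Rle_antisym; [|apply d_nonneg]. apply Rle_plus_epsilon.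
    intros eta He. destruct (Hb 0 (Rle_refl 0) eta He) as [J HJ].
    specialize (HJ J (le_n J)). rewrite (proj1 (Hs J)) in HJ. lra.
  - intros u v Hu Hv.
    assert (Hclose : forall eta, 0 < eta -> exists j,
              d (beta u) (s j u) + d (s j v) (beta v) < eta /\ d (s j u) (s j v) = Rabs (u - v)).
    { intros eta He. destruct (Hb u Hu (eta / 2)) as [J1 H1]; [lra|].
      destruct (Hb v Hv (eta / 2)) as [J2 H2]; [lra|].
      exists (Nat.max J1 J2). specialize (H1 (Nat.max J1 J2) ltac:(lia)).
      specialize (H2 (Nat.max J1 J2) ltac:(lia)). rewrite d_sym in H1.
      split; [lra|apply (proj2 (Hs _))]; auto. }
    apply Rle_antisym; apply Rle_plus_epsilon; intros eta He;
      destruct (Hclose eta He) as [j [Hj Hsj]].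
    + pose proof (d_triangle (beta u) (s j u) (beta v)).
      pose proof (d_triangle (s j u) (s j v) (beta v)). lra.
    + pose proof (d_triangle (s j u) (beta u) (s j v)).
      pose proof (d_triangle (beta u) (beta v) (s j v)).
      rewrite (d_sym (s j u) (beta u)), (d_sym (beta v) (s j v)) in *. lra.
Qed.

Definition unif_conv_compacts (s : nat -> R -> X) (beta : R -> X) : Prop :=
  forall T eta, 0 < eta ->
    exists J, forall j, (J <= j)%nat -> forall t, 0 <= t <= T -> d (s j t) (beta t) < eta.

(* Equicontinuity: all rays are 1-Lipschitz, so convergence on a finite grid of
   mesh [eta / 4] controls [[0, T]]. *)
Lemma rays_unif_conv x0 (s : nat -> R -> X) beta : (forall j, ray x0 (s j)) -> ray x0 beta ->
  (forall t, 0 <= t -> seq_conv (fun j => s j t) (beta t)) -> unif_conv_compacts s beta.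
Proof.
  intros Hs Hb Hconv T eta He. set (delta := eta / 4).
  assert (Hd : 0 < delta) by (unfold delta; lra).
  assert (Hgrid0 : forall l, 0 <= INR l * delta) by (intros; apply Rmult_le_pos; [apply pos_INR|lra]).
  destruct (INR_archimed delta T Hd) as [M HM].
  destruct (seq_conv_finite (fun l j => s j (INR l * delta)) (fun l => beta (INR l * delta)) M)
    with (eta := delta) as [J HJ]; auto.
  exists J. intros j Hj t Ht.
  destruct (grid_approx delta M t Hd) as [l [Hl Htl]]; [lra|].
  specialize (HJ j Hj l Hl). simpl in HJ. set (tl := INR l * delta) in *.
  pose proof (proj2 (Hs j) t tl ltac:(lra) (Hgrid0 l)).
  pose proof (proj2 Hb tl t (Hgrid0 l) ltac:(lra)).
  pose proof (d_triangle (s j t) (s j tl) (beta t)).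
  pose proof (d_triangle (s j tl) (beta tl) (beta t)).
  rewrite (Rabs_minus_sym tl t) in *. unfold delta in *. lra.
Qed.

(* Arzela-Ascoli for geodesic rays: a diagonal subsequence converges at all
   rational times, hence (being 1-Lipschitz) everywhere and uniformly on compacts. *)
Lemma rays_subseq_unif_conv x0 (r : nat -> R -> X) : (forall k, ray x0 (r k)) ->
  exists psi beta, increasing psi /\ ray x0 beta /\ unif_conv_compacts (fun j => r (psi j)) beta.
Proof.
  intros Hr.
  destruct (diagonal_subseq (fun i k => r k (rational_time i))) as [psi [Hpsi Hconv]].
  { intros i phi.
    apply (proper_subseq_conv x0 (rational_time i) (fun k => r (phi k) (rational_time i))).
    intros j.
    rewrite (ray_dist_base x0 _ (Hr _)); [lra|apply rational_time_nonneg]. }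
  set (s := fun j => r (psi j)).
  assert (Hs : forall j, ray x0 (s j)) by (intros; apply Hr).
  assert (Hlim : forall t, exists z, 0 <= t -> seq_conv (fun j => s j t) z).
  { intros t. destruct (Rle_dec 0 t) as [Ht|Ht]; [|exists x0; lra].
    destruct (proper_cauchy_conv x0 t (fun j => s j t)) as [z Hz].
    - intros j. rewrite (ray_dist_base x0 _ (Hs j) t Ht). lra.
    - exact (rays_cauchy x0 s Hs Hconv t Ht).
    - exists z. auto. }
  destruct (choice _ Hlim) as [beta Hbeta].
  pose proof (rays_limit_ray x0 s beta Hs Hbeta) as Hb.
  exists psi, beta. split; [|split]; auto. exact (rays_unif_conv x0 s beta Hs Hb Hbeta).
Qed.

(** * Convergence in a stratum *)

Lemma morse_const_limit x0 (s : nat -> R -> X) beta lam eps c :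
  (forall j, ray x0 (s j)) -> unif_conv_compacts s beta ->
  (forall j, morse_const lam (eps + 1) c (s j)) -> morse_const lam eps (c + 1) beta.
Proof.
  intros Hs Hconv HM q a b Hab Hq [s1 [Hs1 E1]] [s2 [Hs2 E2]] t Ht.
  set (S := Rmax (Rmax s1 s2) (d x0 (q t) + c + 1)).
  assert (HS1 : s1 <= S) by (eapply Rle_trans; [apply Rmax_l|apply Rmax_l]).
  assert (HS2 : s2 <= S) by (eapply Rle_trans; [apply Rmax_r|apply Rmax_l]).
  assert (HS3 : d x0 (q t) + c + 1 <= S) by apply Rmax_r.
  destruct (Hconv S (1 / 2) ltac:(lra)) as [J HJ]. specialize (HJ J (le_n J)).
  destruct (morse_const_close_ends (s J) lam eps c (1 / 2) q a b s1 s2) with (t := t)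
    as [u [Hu Hd]]; auto.
  - rewrite E1, d_sym. left. apply HJ. lra.
  - rewrite E2, d_sym. left. apply HJ. lra.
  - replace (eps + 2 * (1 / 2)) with (eps + 1) by field. apply HM.
  - exists u. split; auto.
    pose proof (ray_dist_base x0 _ (Hs J) u Hu). pose proof (d_triangle x0 (q t) (s J u)).
    assert (d (s J u) (beta u) < 1 / 2) by (apply HJ; lra).
    pose proof (d_triangle (q t) (s J u) (beta u)). lra.
Qed.

Lemma subbasic_unif_nbhd x0 beta K O : ray x0 beta -> co_subbasic X d K O -> in_V X K O beta ->
  exists eta T, 0 < eta /\
    forall h, (forall t, 0 <= t <= T -> d (h t) (beta t) < eta) -> in_V X K O h.
Proof.
  intros Hb [HK [HK0 HO]] HV.
  assert (Hrad : forall t, exists e, 0 < e /\ (K t -> forall y, d (beta t) y < e -> O y)).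
  { intros t. destruct (classic (K t)) as [Kt|Kt].
    - destruct (HO (beta t) (HV t Kt)) as [e [He Hy]]. exists e. auto.
    - exists 1. split; [lra|]. contradiction. }
  destruct (choice _ Hrad) as [E HE].
  destruct (compact_cover_radius K (fun t => E t / 2) HK) as [l Hl].
  { intros t. pose proof (proj1 (HE t)). lra. }
  destruct (list_pos_lower_bound (fun t => E t / 2) l) as [eta [Heta Hlow]].
  { intros t. pose proof (proj1 (HE t)). lra. }
  destruct (list_real_bound (fun t => t + E t) l) as [T HT].
  exists eta, T. split; auto. intros h Hh u Ku.
  destruct (Hl u Ku) as [t [Hin [Kt Htu]]].
  pose proof (HT t Hin). pose proof (Hlow t Hin). pose proof (proj1 (HE t)).
  pose proof (HK0 u Ku). pose proof (HK0 t Kt).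
  apply Rabs_def2 in Htu as Htu'.
  assert (Hhu : d (h u) (beta u) < eta) by (apply Hh; lra).
  apply (proj2 (HE t) Kt).
  pose proof (proj2 Hb t u ltac:(lra) ltac:(lra)).
  pose proof (d_triangle (beta t) (beta u) (h u)). rewrite (d_sym (beta u) (h u)) in *. lra.
Qed.

Lemma basic_unif_nbhd x0 beta B : ray x0 beta -> co_basic X d B -> in_basic X B beta ->
  exists eta T, 0 < eta /\
    forall h, (forall t, 0 <= t <= T -> d (h t) (beta t) < eta) -> in_basic X B h.
Proof.
  intros Hb. induction B as [|[K O] B IH]; intros HB HV.
  - exists 1, 0. split; [lra|]. intros h _ KO [].
  - destruct IH as [eta [T [He HT]]]; [intros KO H; apply HB; right; auto|
                                        intros KO H; apply HV; right; auto|].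
    destruct (subbasic_unif_nbhd x0 beta K O Hb) as [eta' [T' [He' HT']]];
      [apply (HB (K, O)); left; auto|apply (HV (K, O)); left; auto|].
    exists (Rmin eta eta'), (Rmax T T'). split; [apply Rmin_glb_lt; auto|].
    intros h Hh KO [<-|Hin].
    + apply HT'. intros t Ht. eapply Rlt_le_trans; [apply Hh|apply Rmin_r].
      split; [lra|]. eapply Rle_trans; [apply Ht|apply Rmax_r].
    + apply HT; auto. intros t Ht. eapply Rlt_le_trans; [apply Hh|apply Rmin_l].
      split; [lra|]. eapply Rle_trans; [apply Ht|apply Rmax_l].
Qed.

Lemma stratum_open_eventually x0 N W (s : nat -> R -> X) beta :
  stratum_open X d N x0 W -> N_morse_ray X d N x0 beta -> W beta ->
  (forall j, N_morse_ray X d N x0 (s j)) -> unif_conv_compacts s beta ->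
  exists J, forall j, (J <= j)%nat -> W (s j).
Proof.
  intros HW Hb Wb Hs Hconv.
  destruct (HW beta Hb Wb) as [B [HB [HbB HBW]]].
  destruct (basic_unif_nbhd x0 beta B (proj1 Hb) HB HbB) as [eta [T [He HT]]].
  destruct (Hconv T eta He) as [J HJ].
  exists J. intros j Hj. apply HBW; auto.
Qed.

(* At a time [T0] where [g] is far from [beta], the tail of [s] is near [beta];
   finitely many remaining rays are separated from [g] one by one. *)
Lemma avoid_limit_open x0 N (s : nat -> R -> X) beta :
  (forall k, N_morse_ray X d N x0 (s k)) -> N_morse_ray X d N x0 beta ->
  morse_gauge N -> unif_conv_compacts s beta ->
  morse_open X d x0 (fun g => ~ equiv g beta /\ forall k, ~ equiv g (s k)).
Proof.
  intros Hs Hb HN Hconv. apply morse_open_of_pins. intros N' g _ _ [Ugb Ugs].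
  set (D := 2 * N 3 1).
  assert (Hfellow : forall a h, N_morse_ray X d N x0 a -> ray x0 h -> equiv h a ->
            forall T, 0 <= T -> d (h T) (a T) <= D).
  { intros a h [Ha HaM] Hh Hha. exact (fellow_travel x0 a h _ Ha (HaM 3 1 ltac:(lra) ltac:(lra)) Hh Hha). }
  destruct (not_equiv_far g beta Ugb (D + 2)) as [T0 [HT0 HgT0]].
  destruct (Hconv T0 1 ltac:(lra)) as [K HK].
  destruct (separate_finitely x0 s g) with (K := K) as [Ts [HTs Hsep]]; auto.
  { intros k. exists N. auto. }
  exists (T0 :: Ts). split; [intros T [<-|HT]; auto|].
  intros h [Hh _] Hpins.
  assert (Hgh : d (g T0) (h T0) < 1) by (apply Hpins; left; auto).
  pose proof (d_triangle (g T0) (h T0) (beta T0)). split.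
  - intros Hhb. pose proof (Hfellow beta h Hb Hh Hhb T0 HT0). lra.
  - intros k Hhk. destruct (Compare_dec.lt_dec k K).
    + apply (Hsep h Hh) with (k := k); auto. intros T HT. apply Hpins. right. auto.
    + pose proof (Hfellow (s k) h (Hs k) Hh Hhk T0 HT0).
      assert (d (s k T0) (beta T0) < 1) by (apply HK; [lia|lra]).
      pose proof (d_triangle (h T0) (s k T0) (beta T0)). lra.
Qed.

(* The constants gain a margin ([eps + 1] and [+ 1]) so that they survive passing
   to a limit of rays, by [morse_const_limit]. *)
Lemma conv_morse_common_gauge x0 p q :
  (forall n, morse_ray X d x0 (p n)) -> morse_ray X d x0 q -> conv_morse X d x0 p q ->
  exists N, morse_gauge N /\ (forall n, N_morse X d N (p n)) /\ N_morse X d N q /\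
    forall (m : nat -> nat) beta, unif_conv_compacts (fun j => p (m j)) beta -> N_morse X d N beta.
Proof.
  intros Hp Hq Hconv.
  assert (Hpr : forall n, ray x0 (p n)) by (intros n; destruct (Hp n) as [? [_ [H _]]]; exact H).
  destruct (choice (fun (le : R * R) c => 1 <= fst le -> 0 <= snd le ->
              forall n, morse_const (fst le) (snd le) c (p n))) as [Bnd HBnd].
  { intros [lam eps]. destruct (classic (1 <= lam /\ 0 <= eps)) as [[Hl He]|Hn].
    - destruct (conv_morse_common_const x0 p q Hp Hq Hconv lam eps Hl He) as [c Hc].
      exists c. auto.
    - exists 0. intros Hl He. exfalso. auto. }
  destruct Hq as [M [HM [_ HqM]]].
  set (N := fun lam eps => Rmax (Bnd (lam, eps + 1)) (M lam (eps + 1)) + 1).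
  assert (HBnd' : forall lam eps n, 1 <= lam -> 0 <= eps ->
            morse_const lam (eps + 1) (Bnd (lam, eps + 1)) (p n)).
  { intros lam eps n Hl He. apply (HBnd (lam, eps + 1)); simpl; lra. }
  exists N. split; [|split; [|split]].
  - intros lam eps Hl He. pose proof (HM lam (eps + 1) Hl ltac:(lra)).
    pose proof (Rmax_r (Bnd (lam, eps + 1)) (M lam (eps + 1))). unfold N. lra.
  - intros n lam eps Hl He. apply (morse_const_mono lam (eps + 1) eps (Bnd (lam, eps + 1)));
      [lra|pose proof (Rmax_l (Bnd (lam, eps + 1)) (M lam (eps + 1))); unfold N; lra|auto].
  - intros lam eps Hl He. apply (morse_const_mono lam (eps + 1) eps (M lam (eps + 1)));
      [lra|pose proof (Rmax_r (Bnd (lam, eps + 1)) (M lam (eps + 1))); unfold N; lra|].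
    exact (HqM lam (eps + 1) Hl ltac:(lra)).
  - intros m beta Hcv lam eps Hl He.
    apply (morse_const_mono lam eps eps (Bnd (lam, eps + 1) + 1));
      [lra|pose proof (Rmax_l (Bnd (lam, eps + 1)) (M lam (eps + 1))); unfold N; lra|].
    apply (morse_const_limit x0 (fun j => p (m j))); auto.
Qed.

Lemma conv_stratum_of_gauge x0 N p q :
  morse_gauge N -> (forall n, N_morse_ray X d N x0 (p n)) ->
  (forall (m : nat -> nat) beta, unif_conv_compacts (fun j => p (m j)) beta -> N_morse X d N beta) ->
  conv_morse X d x0 p q -> conv_stratum X d N x0 p q.
Proof.
  intros HN HpN HlimN Hconv W Wsat Wopen Wq. apply NNPP. intros Hno.
  destruct (not_eventually_subseq (fun n => W (p n)) Hno) as [m [Hmono HmW]].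
  destruct (rays_subseq_unif_conv x0 (fun j => p (m j))) as [psi [beta [Hpsi [Hbr Hcv]]]];
    [intros; apply HpN|].
  set (s := fun k => p (m (psi k))).
  assert (Hs : forall k, N_morse_ray X d N x0 (s k)) by (intros k; apply HpN).
  assert (Hb : N_morse_ray X d N x0 beta) by (split; [|apply (HlimN (fun k => m (psi k)))]; auto).
  destruct (classic (equiv q beta)) as [Hqb|Hqb].
  - destruct (stratum_open_eventually x0 N W s beta Wopen Hb (Wsat q beta Hqb Wq) Hs Hcv)
      as [J HJ].
    exact (HmW (psi J) (HJ J (le_n J))).
  - set (U := fun g => ~ equiv g beta /\ forall k, ~ equiv g (s k)).
    assert (Usat : saturated X d U).
    { intros g h Hgh [Ub Us]. split; [|intros k]; eapply saturated_not_equiv; eauto. }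
    assert (Uq : U q) by (split; [|intros k Hqs; exact (HmW (psi k) (Wsat q (s k) Hqs Wq))]; auto).
    destruct (Hconv U Usat (avoid_limit_open x0 N s beta Hs Hb HN Hcv) Uq) as [n0 Hn0].
    assert (Hge : (n0 <= m (psi n0))%nat) by apply (increasing_ge _ (increasing_comp m psi Hmono Hpsi)).
    apply (proj2 (Hn0 _ Hge) n0). apply ray_equiv_refl.
Qed.

End MorseRays.

Theorem lemma5p3 (X : Type) (d : X -> X -> R) (x0 : X)
  (Hmet : is_metric X d) (Hprop : proper_space X d) (Hgeod : geodesic_space X d)
  (p : nat -> R -> X) (q : R -> X)
  (Hp : forall n, morse_ray X d x0 (p n)) (Hq : morse_ray X d x0 q)
  (Hconv : conv_morse X d x0 p q) :
  exists N : R -> R -> R, morse_gauge N /\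
    (forall n, in_stratum X d N x0 (p n)) /\ in_stratum X d N x0 q /\
    conv_stratum X d N x0 p q.
Proof.
  destruct (conv_morse_common_gauge X d Hmet Hgeod x0 p q Hp Hq Hconv)
    as [N [HN [HpN [HqN HlimN]]]].
  assert (Hpr : forall n, geod_ray X d x0 (p n)) by (intros n; destruct (Hp n) as [? [_ [H _]]]; exact H).
  assert (Hqr : geod_ray X d x0 q) by (destruct Hq as [? [_ [H _]]]; exact H).
  exists N. split; [exact HN|]. split; [|split].
  - intros n. exists (p n). split; [split; auto|apply ray_equiv_refl; auto].
  - exists q. split; [split; auto|apply ray_equiv_refl; auto].
  - apply (conv_stratum_of_gauge X d Hmet Hgeod Hprop x0 N p q HN); auto.
    intros n. split; auto.
Qed.
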